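(* Assume (A.2). Let $\chi\ge0$ be such that \[ M(y^\star_h(0),y^\star_h(T))+\frac{r^2(y^\star_h,u^\star_h)}{2\omega}\le M(y^\star(0),y^\star(T))+\chi . \] Then $\delta\le\chi$ and $\rho\le\sqrt2\cdot\sqrt{M(y^\star(0),y^\star(T))-C_{obj}+\chi}\cdot\sqrt{\omega}$.
   Context: Setting: $T>0$; $M:\mathbb{R}^{n_y}\times\mathbb{R}^{n_y}\to\mathbb{R}$, $b:\mathbb{R}^{n_y}\times\mathbb{R}^{n_y}\to\mathbb{R}^{n_b}$, $f_1:\mathbb{R}^{n_y}\times\mathbb{R}^{n_u}\times[0,T]\to\mathbb{R}^{n_y}$, $f_2:\mathbb{R}^{n_y}\times\mathbb{R}^{n_u}\times[0,T]\to\mathbb{R}^{n_c}$, bound functions $y_L\le y_R$ on $[0,T]$. The optimal control problem is: minimize $M(y(0),y(T))$ over pairs $(y,u)$ ($y\in L^\infty$ with $\dot y\in L^2$, $u\in L^\infty$) subject to $b(y(0),y(T))=0$, $\dot y=f_1(y,u,t)$, $f_2(y,u,t)=0$ a.e., and pointwise bounds $y_L\le y\le y_R$, $u_L\le u\le u_R$; $(y^\star,u^\star)$ is a local minimizer. With $f(\dot y,y,u,t)=(f_1(y,u,t)-\dot y,f_2(y,u,t))$, $r(y,u)=(\int_0^T\|f(\dot y,y,u,t)\|_2^2dt+\|b(y(0),y(T))\|_2^2)^{1/2}$. $\omega>0$ is a penalty parameter. $(y^\star_h,u^\star_h)$ is a continuous-in-$y$ piecewise polynomial pair (the numerical minimizer)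 satisfying $y_L(t)\le y^\star_h(t)\le y_R(t)$ at $t=0$ and $t=T$. $\delta=\max\{0,M(y^\star_h(0),y^\star_h(T))-M(y^\star(0),y^\star(T))\}$ and $\rho=r(y^\star_h,u^\star_h)$. (A.2): there is $C_{obj}$ with $M(a,a')\ge C_{obj}$ for all $a,a'\in\mathbb{R}^{n_y}$ with $y_L(0)\le a\le y_R(0)$, $y_L(T)\le a'\le y_R(T)$. *)

From HB Require Import structures.
From mathcomp Require Import all_boot all_order all_algebra.
From mathcomp Require Import all_classical all_reals all_analysis.
Set Implicit Arguments. Unset Strict Implicit. Unset Printing Implicit Defensive.
Import Order.TTheory GRing.Theory Num.Theory.
Local Open Scope ring_scope.
Local Open Scope classical_set_scope.

Section Defs.
Variable R : realType.

Definition vle (n : nat) (a b : 'rV[R]_n) : Prop := forall i, a 0 i <= b 0 i.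

Definition sqnorm (n : nat) (v : 'rV[R]_n) : R := \sum_(i < n) (v 0 i) ^+ 2.

Definition dtime (n : nat) (y : R -> 'rV[R]_n) (t : R) : 'rV[R]_n :=
  \row_i (fun s => y s 0 i)^`() t.

(* ||f(ydot,y,u,t)||_2^2 with f = (f1(y,u,t) - ydot, f2(y,u,t)) *)
Definition fres_sq (ny nu nc : nat)
  (f1 : 'rV[R]_ny -> 'rV[R]_nu -> R -> 'rV[R]_ny)
  (f2 : 'rV[R]_ny -> 'rV[R]_nu -> R -> 'rV[R]_nc)
  (y : R -> 'rV[R]_ny) (u : R -> 'rV[R]_nu) (t : R) : R :=
  sqnorm (f1 (y t) (u t) t - dtime y t) + sqnorm (f2 (y t) (u t) t).

Definition resid (ny nu nb nc : nat) (T : R)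
  (b : 'rV[R]_ny -> 'rV[R]_ny -> 'rV[R]_nb)
  (f1 : 'rV[R]_ny -> 'rV[R]_nu -> R -> 'rV[R]_ny)
  (f2 : 'rV[R]_ny -> 'rV[R]_nu -> R -> 'rV[R]_nc)
  (y : R -> 'rV[R]_ny) (u : R -> 'rV[R]_nu) : R :=
  Num.sqrt (Rintegral lebesgue_measure `[0, T] (fres_sq f1 f2 y u)
            + sqnorm (b (y 0) (y T))).

Definition delta_err (ny : nat) (T : R) (M : 'rV[R]_ny -> 'rV[R]_ny -> R)
  (yh ys : R -> 'rV[R]_ny) : R :=
  Num.max 0 (M (yh 0) (yh T) - M (ys 0) (ys T)).

End Defs.

(* The penalty term r^2/(2 omega) is nonnegative, so the objective of the
   numerical minimizer exceeds the optimal one by at most chi.  Since the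
   endpoints of y_h satisfy the bounds, (A.2) gives M(y_h(0), y_h(T)) >= C_obj,
   hence r^2/(2 omega) <= M(y*(0), y*(T)) - C_obj + chi; take square roots. *)
From HB Require Import structures.
From mathcomp Require Import all_boot all_order all_algebra.
From mathcomp Require Import all_classical all_reals all_analysis.
From mathcomp Require Import lra.
Import Order.TTheory GRing.Theory Num.Theory.
Local Open Scope ring_scope.

Set Implicit Arguments.
Unset Strict Implicit.

Lemma penalty_objective_gap (R : realFieldType) (x y q chi : R) :
  0 <= q -> 0 <= chi -> x + q <= y + chi -> Num.max 0 (x - y) <= chi.
Proof. by move=> q0 chi0 h; rewrite ge_max chi0 /=; lra. Qed.

Lemma penalty_sqr_le (R : realFieldType) (r w c x y chi : R) :
  0 < w -> c <= x -> x + r ^+ 2 / (2 * w) <= y + chi ->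
  r ^+ 2 <= 2 * (y - c + chi) * w.
Proof.
move=> w0 cx h.
have : r ^+ 2 / (2 * w) <= y - c + chi by lra.
by rewrite ler_pdivrMr ?mulr_gt0 // mulrCA mulrA.
Qed.

Lemma ler_sqrt_of_sqr (R : rcfType) (r a : R) :
  0 <= r -> r ^+ 2 <= a -> r <= Num.sqrt a.
Proof. by move=> r0 ra; rewrite -(ger0_norm r0) -sqrtr_sqr ler_wsqrtr. Qed.

Lemma penalty_residual_bound (R : rcfType) (r w c x y chi : R) :
  0 <= r -> 0 < w -> c <= x -> x + r ^+ 2 / (2 * w) <= y + chi ->
  r <= Num.sqrt 2 * Num.sqrt (y - c + chi) * Num.sqrt w.
Proof.
move=> r0 w0 cx h.
have hr2 := penalty_sqr_le w0 cx h.
have K0 : 0 <= y - c + chi.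
  have := le_trans (sqr_ge0 r) hr2.
  by rewrite pmulr_lge0 // pmulr_rge0.
by rewrite -!sqrtrM ?mulr_ge0 // ler_sqrt_of_sqr.
Qed.

Lemma resid_ge0 (R : realType) (ny nu nb nc : nat) (T : R)
  (b : 'rV[R]_ny -> 'rV[R]_ny -> 'rV[R]_nb)
  (f1 : 'rV[R]_ny -> 'rV[R]_nu -> R -> 'rV[R]_ny)
  (f2 : 'rV[R]_ny -> 'rV[R]_nu -> R -> 'rV[R]_nc)
  (y : R -> 'rV[R]_ny) (u : R -> 'rV[R]_nu) :
  0 <= resid T b f1 f2 y u.
Proof. exact: sqrtr_ge0. Qed.

Unset Implicit Arguments.

Theorem mainTheorem6 (R : realType) (ny nu nb nc : nat) (T : R)
  (M : 'rV[R]_ny -> 'rV[R]_ny -> R)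
  (b : 'rV[R]_ny -> 'rV[R]_ny -> 'rV[R]_nb)
  (f1 : 'rV[R]_ny -> 'rV[R]_nu -> R -> 'rV[R]_ny)
  (f2 : 'rV[R]_ny -> 'rV[R]_nu -> R -> 'rV[R]_nc)
  (yL yR : R -> 'rV[R]_ny)
  (ystar : R -> 'rV[R]_ny) (ustar : R -> 'rV[R]_nu)
  (yh : R -> 'rV[R]_ny) (uh : R -> 'rV[R]_nu)
  (omega chi Cobj : R) :
  0 < T ->
  0 < omega ->
  (* y_L <= y_h <= y_R at t = 0 and t = T *)
  vle (yL 0) (yh 0) -> vle (yh 0) (yR 0) ->
  vle (yL T) (yh T) -> vle (yh T) (yR T) ->
  (* (A.2) *)
  (forall a a' : 'rV[R]_ny, vle (yL 0) a -> vle a (yR 0) ->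
     vle (yL T) a' -> vle a' (yR T) -> Cobj <= M a a') ->
  0 <= chi ->
  M (yh 0) (yh T) + (resid T b f1 f2 yh uh) ^+ 2 / (2 * omega)
    <= M (ystar 0) (ystar T) + chi ->
  delta_err T M yh ystar <= chi /\
  resid T b f1 f2 yh uh
    <= Num.sqrt 2 * Num.sqrt (M (ystar 0) (ystar T) - Cobj + chi) * Num.sqrt omega.
Proof.
move=> _ omega0 yL0 yR0 yLT yRT A2 chi0 penalized.
have Cobj_le := A2 _ _ yL0 yR0 yLT yRT.
split.
- apply: penalty_objective_gap chi0 penalized.
  by rewrite divr_ge0 ?sqr_ge0 // mulr_ge0 // ltW.
- exact: penalty_residual_bound (resid_ge0 _ _ _ _ _ _) omega0 Cobj_le penalized.
Qed.
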